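(* Let $\mu,\sigma,r,c_s>0$ and $\theta\in\mathbb{R}$ be constants. Define \[F(x)=\int_0^\infty u^{\frac{r}{\mu}-1}e^{\sqrt{\frac{2\mu}{\sigma^2}}(x-\theta)u-\frac{u^2}{2}}\,du,\qquad G(x)=\int_0^\infty u^{\frac{r}{\mu}-1}e^{\sqrt{\frac{2\mu}{\sigma^2}}(\theta-x)u-\frac{u^2}{2}}\,du,\] $\psi(x)=F(x)/G(x)$ (a strictly increasing bijection from $\mathbb{R}$ onto $(0,\infty)$), $h_s(x)=e^x-c_s$, and \[H(z)=\begin{cases}\dfrac{h_s}{G}\circ\psi^{-1}(z), & z>0,\\[1mm] \lim_{x\to-\infty}\dfrac{(h_s(x))^+}{G(x)}, & z=0.\end{cases}\] Let $x_s$ be the unique root of $f_s(x)=(\mu\theta+\frac12\sigma^2-r)-\mu x+rc_se^{-x}$. Then $H$ is continuous on $[0,+\infty)$, twice differentiable on $(0,+\infty)$, and: (i) $H(0)=0$, $H(z)<0$ for $z\in(0,\psi(\ln c_s))$ and $H(z)>0$ for $z\in(\psi(\ln c_s),+\infty)$; (ii) $H$ is strictly increasing on $(\psi(\ln c_s),+\infty)$, and $H'(z)\to0$ as $z\to+\infty$; (iii) $H$ is convex on $(0,\psi(x_s)]$ and concave on $[\psi(x_s),+\infty)$.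
   Context: $F$ and $G$ are the positive increasing and decreasing solutions of $\frac{\sigma^2}{2}u''+\mu(\theta-x)u'=ru$ (the generator of the OU process $dX_t=\mu(\theta-X_t)dt+\sigma dB_t$). *)

From Stdlib Require Import Reals ClassicalEpsilon.
From Coquelicot Require Import Coquelicot.
Open Scope R_scope.

Definition kappa (mu sigma : R) : R := sqrt (2 * mu / sigma ^ 2).

(* F(x) = int_0^oo u^(r/mu - 1) exp(kappa (x - theta) u - u^2/2) du
   (improper at both ends: at 0+ the power may be singular, at +oo). *)
Definition F_ou (mu sigma r theta x : R) : R :=
  RInt_gen (fun u => Rpower u (r / mu - 1) *
                     exp (kappa mu sigma * (x - theta) * u - u ^ 2 / 2))
           (at_right 0) (Rbar_locally p_infty).

Definition G_ou (mu sigma r theta x : R) : R :=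
  RInt_gen (fun u => Rpower u (r / mu - 1) *
                     exp (kappa mu sigma * (theta - x) * u - u ^ 2 / 2))
           (at_right 0) (Rbar_locally p_infty).

Definition psi_ou (mu sigma r theta x : R) : R :=
  F_ou mu sigma r theta x / G_ou mu sigma r theta x.

Definition psi_inv (mu sigma r theta z : R) : R :=
  epsilon (inhabits 0) (fun x => psi_ou mu sigma r theta x = z).

Definition h_s (cs x : R) : R := exp x - cs.

(* H(z) = (h_s/G)(psi^{-1} z) for z > 0, and
   H(0) = lim_{x -> -oo} (h_s x)^+ / G x  (the value given for z <= 0;
   only z >= 0 is relevant). *)
Definition H_ou (mu sigma r theta cs z : R) : R :=
  if Rlt_dec 0 z then
    h_s cs (psi_inv mu sigma r theta z) /
      G_ou mu sigma r theta (psi_inv mu sigma r theta z)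
  else
    real (Lim (fun x => Rmax (h_s cs x) 0 / G_ou mu sigma r theta x) m_infty).

Definition f_s (mu sigma r theta cs x : R) : R :=
  (mu * theta + sigma ^ 2 / 2 - r) - mu * x + r * cs * exp (- x).

Definition convex_on (D : R -> Prop) (f : R -> R) : Prop :=
  forall a b t, D a -> D b -> 0 <= t <= 1 ->
    f (t * a + (1 - t) * b) <= t * f a + (1 - t) * f b.

Definition concave_on (D : R -> Prop) (f : R -> R) : Prop :=
  forall a b t, D a -> D b -> 0 <= t <= 1 ->
    t * f a + (1 - t) * f b <= f (t * a + (1 - t) * b).

From Stdlib Require Import Reals Lra Ranalysis5 ClassicalEpsilon FunctionalExtensionality.
From Coquelicot Require Import Coquelicot.
Open Scope R_scope.

(* With al = r / mu and k = kappa, G (x) = Phi 0 (k (theta - x)) and F (x) = Phi 0 (k (x - theta)),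
   where Phi n y is the integral of u ^ (al - 1 + n) exp (y u - u ^ 2 / 2) over (0, +oo).
   Differentiating under the integral gives Phi n' = Phi (n + 1), and integrating the derivative of
   u ^ al exp (y u - u ^ 2 / 2) gives the ODE Phi 2 = y Phi 1 + al Phi 0.
   Hence psi = F / G has derivative W / G ^ 2 > 0 (W the Wronskian) and, since G blows up at -oo
   and F at +oo, is a bijection onto (0, +oo).  Writing x = psi^-1 z, the chain rule gives
   H' (z) = (e^x G - h_s G') / W, whose x-derivative, after eliminating G'' with the ODE, is
   G / W times a positive multiple of e^x f_s (x).  As f_s decreases and vanishes at x_s, H' increases
   on (0, psi x_s] and decreases afterwards; H' tends to 0 because F and F' grow at least like
   e^(2 (x - theta)) while the numerator is O (e^x (G - G')). *)

Lemma ball_Rabs (x e y : R) : ball x e y <-> Rabs (y - x) < e.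
Proof. reflexivity. Qed.

Lemma ball_bounds (x e y : R) : ball x e y -> x - e < y < x + e.
Proof. intro H. change (Rabs (y - x) < e) in H. apply Rabs_def2 in H. lra. Qed.

Lemma exp_le_exp (x y : R) : x <= y -> exp x <= exp y.
Proof. intros [H|H]; [left; apply exp_increasing | subst; right]; auto. Qed.

(** * Improper integrals over (0, +oo) *)

Lemma filter_prod_0_infty (Q : R -> R -> Prop) :
  (forall a b, 0 < a < 1 -> 1 < b -> Q a b) ->
  filter_prod (at_right 0) (Rbar_locally p_infty) (fun ab => Q (fst ab) (snd ab)).
Proof.
  intro HQ.
  apply Filter_prod with (fun a => 0 < a < 1) (fun b => 1 < b).
  - exists (mkposreal 1 Rlt_0_1). intros a Ha Ha0.
    apply ball_bounds in Ha. simpl in Ha. lra.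
  - exists 1. auto.
  - intros a b Ha Hb. apply HQ; auto.
Qed.

Lemma is_RInt_gen_0_infty_intro (f : R -> R) (l : R) :
  (forall a b, 0 < a -> a <= b -> ex_RInt f a b) ->
  (forall eps, 0 < eps -> exists d, 0 < d /\ exists M, forall a b,
      0 < a < d -> M < b -> a <= b -> Rabs (RInt f a b - l) < eps) ->
  is_RInt_gen f (at_right 0) (Rbar_locally p_infty) l.
Proof.
  intros Hex Hlim P [eps HP].
  destruct (Hlim eps (cond_pos eps)) as [d [Hd [M HM]]].
  assert (Hm : 0 < Rmin d 1) by (apply Rmin_pos; lra).
  assert (Rmin d 1 <= d) by apply Rmin_l. assert (Rmin d 1 <= 1) by apply Rmin_r.
  assert (M <= Rmax M 1) by apply Rmax_l. assert (1 <= Rmax M 1) by apply Rmax_r.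
  apply Filter_prod with (fun a => 0 < a < Rmin d 1) (fun b => Rmax M 1 < b).
  - exists (mkposreal _ Hm). intros a Ha Ha0.
    apply ball_bounds in Ha. simpl in Ha. lra.
  - exists (Rmax M 1). auto.
  - intros a b Ha Hb. exists (RInt f a b). split.
    + apply (RInt_correct f a b), Hex; lra.
    + apply HP, ball_Rabs, HM; lra.
Qed.

Lemma is_RInt_gen_0_infty_elim (f : R -> R) (l : R) :
  is_RInt_gen f (at_right 0) (Rbar_locally p_infty) l ->
  forall eps, 0 < eps -> exists d, 0 < d /\ exists M, forall a b,
      0 < a < d -> M < b -> forall y, is_RInt f a b y -> Rabs (y - l) < eps.
Proof.
  intros H eps Heps.
  destruct (H (ball l (mkposreal eps Heps)) (locally_ball l _)) as [Q R' [d Hd] [M HM] HQR].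
  exists d. split; [apply cond_pos |]. exists M.
  intros a b Ha Hb y Hy.
  destruct (HQR a b) as [y' [Hy' Hb']].
  - apply Hd; [apply ball_Rabs; rewrite Rminus_0_r, Rabs_pos_eq |]; lra.
  - apply HM. auto.
  - simpl in Hy', Hb'.
    apply (is_RInt_unique f a b) in Hy. apply (is_RInt_unique f a b) in Hy'.
    rewrite <- Hy, Hy'. exact Hb'.
Qed.

Lemma RInt_subinterval_le (f : R -> R) a a0 b0 b :
  (forall a b, 0 < a -> a <= b -> ex_RInt f a b) ->
  (forall u, 0 < u -> 0 <= f u) ->
  0 < a -> a <= a0 -> a0 <= b0 -> b0 <= b ->
  RInt f a0 b0 <= RInt f a b.
Proof.
  intros Hex Hpos Ha H1 H2 H3.
  rewrite <- (RInt_Chasles f a a0 b), <- (RInt_Chasles f a0 b0 b) by (apply Hex; lra).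
  assert (0 <= RInt f a a0) by (apply RInt_ge_0; auto; intros; apply Hpos; lra).
  assert (0 <= RInt f b0 b) by (apply RInt_ge_0; [lra | apply Hex; lra | intros; apply Hpos; lra]).
  change plus with Rplus. lra.
Qed.

(* The integral is the supremum of the integrals over compact subintervals. *)
Lemma ex_RInt_gen_0_infty_bounded (f : R -> R) (M : R) :
  (forall a b, 0 < a -> a <= b -> ex_RInt f a b) ->
  (forall u, 0 < u -> 0 <= f u) ->
  (forall a b, 0 < a -> a <= b -> RInt f a b <= M) ->
  ex_RInt_gen f (at_right 0) (Rbar_locally p_infty).
Proof.
  intros Hex Hpos HM.
  set (E := fun v => exists a b, 0 < a /\ a <= b /\ v = RInt f a b).
  assert (Hbd : bound E) by (exists M; intros v [a [b [Ha [Hab ->]]]]; auto).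
  assert (He : exists v, E v) by (exists (RInt f 1 1), 1, 1; repeat split; lra).
  destruct (completeness E Hbd He) as [S [HS1 HS2]].
  exists S. apply is_RInt_gen_0_infty_intro; auto.
  intros eps Heps.
  assert (exists v, E v /\ S - eps < v) as [v [[a0 [b0 [Ha0 [Hab0 ->]]]] Hv]].
  { apply Classical_Prop.NNPP. intro Hn.
    assert (S <= S - eps); [| lra].
    apply HS2. intros v Hv. apply Rnot_lt_le. intro. apply Hn. eauto. }
  exists a0. split; auto. exists b0. intros a b Ha Hbb Hab.
  assert (RInt f a0 b0 <= RInt f a b) by (apply RInt_subinterval_le; auto; lra).
  assert (RInt f a b <= S) by (apply HS1; exists a, b; repeat split; lra).
  apply Rabs_def1; lra.
Qed.

Lemma is_RInt_gen_0_infty_ge (f : R -> R) (l lo : R) :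
  (forall a b, 0 < a -> a <= b -> ex_RInt f a b) ->
  is_RInt_gen f (at_right 0) (Rbar_locally p_infty) l ->
  (exists d, 0 < d /\ exists M,
     forall a b, 0 < a < d -> M < b -> a <= b -> lo <= RInt f a b) ->
  lo <= l.
Proof.
  intros Hex Hl [d [Hd [M HM]]].
  apply Rnot_lt_le. intro Hlt.
  destruct (is_RInt_gen_0_infty_elim f l Hl (lo - l)) as [d' [Hd' [M' HM']]]; [lra |].
  set (a := Rmin d d' / 2). set (b := Rmax (Rmax M M') a + 1).
  assert (0 < Rmin d d') by (apply Rmin_pos; lra).
  assert (Rmin d d' <= d) by apply Rmin_l. assert (Rmin d d' <= d') by apply Rmin_r.
  assert (Rmax M M' <= Rmax (Rmax M M') a) by apply Rmax_l.
  assert (a <= Rmax (Rmax M M') a) by apply Rmax_r.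
  assert (M <= Rmax M M') by apply Rmax_l. assert (M' <= Rmax M M') by apply Rmax_r.
  assert (Ha : 0 < a /\ a < d /\ a < d') by (unfold a; lra).
  assert (Hb : M < b /\ M' < b /\ a <= b) by (unfold b; lra).
  assert (Hlo := HM a b ltac:(lra) ltac:(lra) ltac:(lra)).
  assert (Hl' := HM' a b ltac:(lra) ltac:(lra) (RInt f a b)
                  ltac:(apply (RInt_correct f a b), Hex; lra)).
  apply Rabs_def2 in Hl'. lra.
Qed.

(** * The integrals [Phi al n y] *)

Definition Phi_integrand (al : R) (n : nat) (y u : R) : R :=
  exp ((al - 1) * ln u) * u ^ n * exp (y * u - u ^ 2 / 2).

Definition Phi (al : R) (n : nat) (y : R) : R :=
  RInt_gen (Phi_integrand al n y) (at_right 0) (Rbar_locally p_infty).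

Lemma Phi_integrand_pos al n y u : 0 < u -> 0 < Phi_integrand al n y u.
Proof.
  intro Hu. unfold Phi_integrand.
  repeat apply Rmult_lt_0_compat; try apply exp_pos. apply pow_lt; auto.
Qed.

Lemma Phi_integrand_continuous al n y u : 0 < u -> continuous (Phi_integrand al n y) u.
Proof.
  intro Hu. apply (ex_derive_continuous (V := R_NormedModule)).
  unfold Phi_integrand. auto_derive. auto.
Qed.

Lemma ex_RInt_Phi_integrand al n y a b : 0 < a -> a <= b -> ex_RInt (Phi_integrand al n y) a b.
Proof.
  intros Ha Hab. apply (ex_RInt_continuous (V := R_CompleteNormedModule)). intros z Hz.
  rewrite Rmin_left in Hz by auto. apply Phi_integrand_continuous. lra.
Qed.

Lemma Phi_integrand_shift al n y h u :
  Phi_integrand al n (y + h) u = Phi_integrand al n y u * exp (h * u).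
Proof.
  unfold Phi_integrand. rewrite (Rmult_assoc (exp ((al - 1) * ln u) * u ^ n)), <- exp_plus.
  do 2 f_equal. ring.
Qed.

Lemma Phi_integrand_S al n y u : Phi_integrand al (S n) y u = Phi_integrand al n y u * u.
Proof. unfold Phi_integrand. simpl. ring. Qed.

(* Integrability: the integrand is dominated by a multiple of the derivative of the bounded
   function [(u / (1 + u)) ^ al]. *)

Definition ratio_pow (al u : R) : R := exp (al * (ln u - ln (1 + u))).
Definition ratio_pow_deriv (al u : R) : R := al * ratio_pow al u / (u * (1 + u)).

Lemma is_derive_ratio_pow al u : 0 < u -> is_derive (ratio_pow al) u (ratio_pow_deriv al u).
Proof.
  intro Hu. unfold ratio_pow_deriv, ratio_pow. auto_derive; [lra |]. unfold Rminus. field. lra.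
Qed.

Lemma ratio_pow_deriv_continuous al u : 0 < u -> continuous (ratio_pow_deriv al) u.
Proof.
  intro Hu. apply (ex_derive_continuous (V := R_NormedModule)).
  unfold ratio_pow_deriv, ratio_pow. auto_derive. repeat split; try lra. nra.
Qed.

Lemma ex_RInt_ratio_pow_deriv al a b : 0 < a -> a <= b -> ex_RInt (ratio_pow_deriv al) a b.
Proof.
  intros Ha Hab. apply (ex_RInt_continuous (V := R_CompleteNormedModule)). intros z Hz.
  rewrite Rmin_left in Hz by auto. apply ratio_pow_deriv_continuous. lra.
Qed.

Lemma RInt_ratio_pow_deriv_le_1 al a b : 0 < al -> 0 < a -> a <= b ->
  RInt (ratio_pow_deriv al) a b <= 1.
Proof.
  intros Hal Ha Hab.
  assert (Hbounds : forall u, 0 < u -> 0 < ratio_pow al u <= 1).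
  { intros u Hu. split; [apply exp_pos |]. rewrite <- exp_0. apply exp_le_exp.
    assert (ln u <= ln (1 + u)) by (apply ln_le; lra). nra. }
  assert (HI : is_RInt (ratio_pow_deriv al) a b (minus (ratio_pow al b) (ratio_pow al a))).
  { apply (is_RInt_derive (V := R_CompleteNormedModule)); intros x Hx;
      rewrite Rmin_left, Rmax_right in Hx by auto;
      [apply is_derive_ratio_pow | apply ratio_pow_deriv_continuous]; lra. }
  apply (is_RInt_unique (ratio_pow_deriv al) a b) in HI. rewrite HI.
  assert (Hb := Hbounds b ltac:(lra)). assert (Ha' := Hbounds a Ha).
  unfold minus, plus, opp; simpl. lra.
Qed.

Lemma Phi_integrand_le_ratio_pow_deriv al n y u : 0 < al -> 0 < u ->
  Phi_integrand al n y u <= exp ((y + al + 1 + INR n) ^ 2 / 2) / al * ratio_pow_deriv al u.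
Proof.
  intros Hal Hu. set (c := y + al + 1 + INR n).
  assert (Hun : u ^ n <= exp (INR n * u)).
  { replace (exp (INR n * u)) with (exp u ^ n)
      by (rewrite <- Rpower_pow by apply exp_pos; unfold Rpower; rewrite ln_exp, Rmult_comm; auto).
    apply pow_incr. assert (H := exp_ineq1_le u). lra. }
  assert (Hln : ln (1 + u) <= u).
  { rewrite <- (ln_exp u) at 2. apply ln_le; [lra |]. apply exp_ineq1_le. }
  unfold ratio_pow_deriv, ratio_pow, Phi_integrand.
  apply Rmult_le_reg_r with (u * (1 + u)); [nra |].
  replace (exp (c ^ 2 / 2) / al * (al * exp (al * (ln u - ln (1 + u))) / (u * (1 + u))) * (u * (1 + u)))
    with (exp (c ^ 2 / 2 + al * (ln u - ln (1 + u)))) by (rewrite exp_plus; field; split; lra).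
  apply Rle_trans with (exp ((al - 1) * ln u) * exp (INR n * u) * exp (y * u - u ^ 2 / 2)
                          * (exp (ln u) * exp (ln (1 + u)))).
  { rewrite (exp_ln u), (exp_ln (1 + u)) by lra.
    apply Rmult_le_compat_r; [nra |].
    apply Rmult_le_compat_r; [left; apply exp_pos |].
    apply Rmult_le_compat_l; [left; apply exp_pos | auto]. }
  rewrite <- !exp_plus. apply exp_le_exp.
  (* Complete the square in [u] and use [ln (1 + u) <= u]. *)
  assert (0 <= (u - c) ^ 2) by apply pow2_ge_0.
  assert ((1 + al) * ln (1 + u) <= (1 + al) * u) by (apply Rmult_le_compat_l; lra).
  unfold c in *. nra.
Qed.

Lemma ex_RInt_gen_Phi al n y : 0 < al ->
  ex_RInt_gen (Phi_integrand al n y) (at_right 0) (Rbar_locally p_infty).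
Proof.
  intro Hal.
  set (K := exp ((y + al + 1 + INR n) ^ 2 / 2) / al).
  assert (HK : 0 < K) by (apply Rdiv_lt_0_compat; [apply exp_pos | auto]).
  apply ex_RInt_gen_0_infty_bounded with K.
  - intros. apply ex_RInt_Phi_integrand; auto.
  - intros. left. apply Phi_integrand_pos; auto.
  - intros a b Ha Hab.
    assert (Hg := ex_RInt_ratio_pow_deriv al a b Ha Hab).
    apply Rle_trans with (RInt (fun u => scal K (ratio_pow_deriv al u)) a b).
    + apply RInt_le; [lra | exact (ex_RInt_Phi_integrand al n y a b Ha Hab)
                     | exact (ex_RInt_scal (ratio_pow_deriv al) a b K Hg) |].
      intros x Hx. apply Phi_integrand_le_ratio_pow_deriv; auto. lra.
    + apply Rle_trans with (scal K (RInt (ratio_pow_deriv al) a b)).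
      { right. apply (RInt_scal (V := R_CompleteNormedModule)). exact Hg. }
      assert (H := RInt_ratio_pow_deriv_le_1 al a b Hal Ha Hab).
      change (K * RInt (ratio_pow_deriv al) a b <= K). nra.
Qed.

Lemma is_RInt_gen_Phi al n y : 0 < al ->
  is_RInt_gen (Phi_integrand al n y) (at_right 0) (Rbar_locally p_infty) (Phi al n y).
Proof.
  intro Hal. apply (RInt_gen_correct (V := R_CompleteNormedModule)), ex_RInt_gen_Phi; auto.
Qed.

Lemma RInt_le_Phi al n y N : 0 < al -> 0 < N -> RInt (Phi_integrand al n y) N (N + 1) <= Phi al n y.
Proof.
  intros Hal HN. apply is_RInt_gen_0_infty_ge with (Phi_integrand al n y).
  - intros; apply ex_RInt_Phi_integrand; auto.
  - apply is_RInt_gen_Phi; auto.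
  - exists N. split; auto. exists (N + 1). intros a b Ha Hb Hab.
    apply RInt_subinterval_le; try lra.
    + intros; apply ex_RInt_Phi_integrand; auto.
    + intros; left; apply Phi_integrand_pos; auto.
Qed.

Lemma RInt_Phi_integrand_pos al n y N : 0 < N -> 0 < RInt (Phi_integrand al n y) N (N + 1).
Proof.
  intro HN. apply RInt_gt_0; [lra | |]; intros.
  - apply Phi_integrand_pos; lra.
  - apply Phi_integrand_continuous; lra.
Qed.

Lemma Phi_pos al n y : 0 < al -> 0 < Phi al n y.
Proof.
  intro Hal. apply Rlt_le_trans with (RInt (Phi_integrand al n y) 1 (1 + 1)).
  - apply RInt_Phi_integrand_pos; lra.
  - apply RInt_le_Phi; lra.
Qed.

(* Already the part of the integral over [N, N + 1] grows like [exp (N y)]. *)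
Lemma Phi_exp_lb al n N : 0 < al -> 0 < N ->
  exists c, 0 < c /\ forall y, 0 <= y -> c * exp (N * y) <= Phi al n y.
Proof.
  intros Hal HN. exists (RInt (Phi_integrand al n 0) N (N + 1)).
  split; [apply RInt_Phi_integrand_pos; auto |].
  intros y Hy. apply Rle_trans with (RInt (Phi_integrand al n y) N (N + 1)); [| apply RInt_le_Phi; auto].
  assert (Hex0 := ex_RInt_Phi_integrand al n 0 N (N + 1) HN ltac:(lra)).
  rewrite Rmult_comm.
  change (exp (N * y) * RInt (Phi_integrand al n 0) N (N + 1))
    with (scal (exp (N * y)) (RInt (Phi_integrand al n 0) N (N + 1))).
  rewrite <- (RInt_scal (V := R_CompleteNormedModule)) by exact Hex0.
  apply RInt_le; [lra | exact (ex_RInt_scal _ N (N + 1) (exp (N * y)) Hex0)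
                 | exact (ex_RInt_Phi_integrand al n y N (N + 1) HN ltac:(lra)) |].
  intros u Hu. replace y with (0 + y) at 2 by ring.
  rewrite Phi_integrand_shift.
  change (scal (exp (N * y)) (Phi_integrand al n 0 u)) with (exp (N * y) * Phi_integrand al n 0 u).
  rewrite Rmult_comm. apply Rmult_le_compat_l; [left; apply Phi_integrand_pos; lra |].
  apply exp_le_exp. rewrite (Rmult_comm y u). apply Rmult_le_compat_r; lra.
Qed.

Lemma Phi_le_compat al n y y' : 0 < al -> y <= y' -> Phi al n y <= Phi al n y'.
Proof.
  intros Hal Hy. apply Rle_trans with (norm (Phi al n y)); [apply Rle_abs |].
  apply (RInt_gen_norm (V := R_CompleteNormedModule) (Fa := at_right 0)
           (Fb := Rbar_locally p_infty) (Phi_integrand al n y) (Phi_integrand al n y'));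
    [| | apply is_RInt_gen_Phi; auto | apply is_RInt_gen_Phi; auto].
  - apply (filter_prod_0_infty (fun a b => a <= b)). intros; lra.
  - apply (filter_prod_0_infty
             (fun a b => forall x, a <= x <= b -> Rabs (Phi_integrand al n y x) <= Phi_integrand al n y' x)).
    intros a b Ha Hb x Hx.
    rewrite Rabs_pos_eq by (left; apply Phi_integrand_pos; lra).
    replace y' with (y + (y' - y)) by ring. rewrite Phi_integrand_shift.
    rewrite <- (Rmult_1_r (Phi_integrand al n y x)) at 1.
    apply Rmult_le_compat_l; [left; apply Phi_integrand_pos; lra |].
    rewrite <- exp_0. apply exp_le_exp. apply Rmult_le_pos; lra.
Qed.

Lemma exp_taylor1_bound t : Rabs (exp t - 1 - t) <= t ^ 2 * exp (Rabs t).
Proof.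
  assert (Hbetween : forall c t, Rmin 0 t <= c <= Rmax 0 t -> Rabs c <= Rabs t).
  { intros c s. unfold Rmin, Rmax, Rabs.
    destruct (Rle_dec 0 s); destruct (Rcase_abs c); destruct (Rcase_abs s); lra. }
  destruct (MVT_abs (fun s => exp s - s) (fun s => exp s - 1) 0 t) as [c [Hc1 Hc2]].
  { intros c _. apply is_derive_Reals. auto_derive; auto. ring. }
  destruct (MVT_abs exp exp 0 c) as [d [Hd1 Hd2]].
  { intros d _. apply derivable_pt_lim_exp. }
  rewrite exp_0, !Rminus_0_r in *.
  replace (exp t - 1 - t) with (exp t - t - 1) by ring.
  rewrite Hc1, Hd1, (Rabs_pos_eq (exp d)) by (left; apply exp_pos).
  assert (Hct := Hbetween c t Hc2). assert (Hdc := Hbetween d c Hd2).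
  assert (exp d <= exp (Rabs t)) by (apply exp_le_exp; assert (d <= Rabs d) by apply Rle_abs; lra).
  assert (0 <= Rabs c) by apply Rabs_pos.
  rewrite <- (pow2_abs t).
  apply Rle_trans with (exp (Rabs t) * Rabs t * Rabs t); [| right; ring].
  apply Rmult_le_compat_r; [lra |]. apply Rmult_le_compat; auto. left; apply exp_pos.
Qed.

Lemma Phi_taylor1_bound al n y h : 0 < al -> Rabs h <= 1 ->
  Rabs (Phi al n (y + h) - Phi al n y - h * Phi al (S n) y)
    <= h ^ 2 * Phi al (S (S n)) (y + 1).
Proof.
  intros Hal Hh.
  assert (Hdiff : is_RInt_gen
            (fun u => Phi_integrand al n (y + h) u - Phi_integrand al n y u
                      - h * Phi_integrand al (S n) y u)
            (at_right 0) (Rbar_locally p_infty)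
            (Phi al n (y + h) - Phi al n y - h * Phi al (S n) y)).
  { apply (is_RInt_gen_minus (V := R_NormedModule)).
    - apply (is_RInt_gen_minus (V := R_NormedModule)); apply is_RInt_gen_Phi; auto.
    - apply (is_RInt_gen_scal (V := R_NormedModule)), is_RInt_gen_Phi; auto. }
  assert (Hbound : is_RInt_gen (fun u => h ^ 2 * Phi_integrand al (S (S n)) (y + 1) u)
                     (at_right 0) (Rbar_locally p_infty) (h ^ 2 * Phi al (S (S n)) (y + 1))).
  { apply (is_RInt_gen_scal (V := R_NormedModule)), is_RInt_gen_Phi; auto. }
  refine (RInt_gen_norm (V := R_CompleteNormedModule) (Fa := at_right 0)
            (Fb := Rbar_locally p_infty) _ _ _ _ _ _ Hdiff Hbound).
  - apply (filter_prod_0_infty (fun a b => a <= b)). intros; lra.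
  - apply (filter_prod_0_infty (fun a b => forall x, a <= x <= b ->
      Rabs (Phi_integrand al n (y + h) x - Phi_integrand al n y x - h * Phi_integrand al (S n) y x)
        <= h ^ 2 * Phi_integrand al (S (S n)) (y + 1) x)).
    intros a b Ha Hb x Hx.
    assert (Hf := Phi_integrand_pos al n y x ltac:(lra)).
    rewrite Phi_integrand_shift, !Phi_integrand_S, Phi_integrand_shift, Rmult_1_l.
    replace (Phi_integrand al n y x * exp (h * x) - Phi_integrand al n y x
             - h * (Phi_integrand al n y x * x))
      with (Phi_integrand al n y x * (exp (h * x) - 1 - h * x)) by ring.
    rewrite Rabs_mult, (Rabs_pos_eq (Phi_integrand al n y x)) by lra.
    apply Rle_trans with (Phi_integrand al n y x * ((h * x) ^ 2 * exp (Rabs (h * x)))).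
    { apply Rmult_le_compat_l; [lra | apply exp_taylor1_bound]. }
    assert (exp (Rabs (h * x)) <= exp x).
    { apply exp_le_exp. rewrite Rabs_mult, (Rabs_pos_eq x) by lra. nra. }
    assert (0 <= (h * x) ^ 2) by apply pow2_ge_0.
    apply Rle_trans with (Phi_integrand al n y x * ((h * x) ^ 2 * exp x)); [| right; ring].
    apply Rmult_le_compat_l; [lra |]. apply Rmult_le_compat_l; auto.
Qed.

Lemma is_derive_Phi al n y : 0 < al -> is_derive (Phi al n) y (Phi al (S n) y).
Proof.
  intro Hal. apply is_derive_Reals. intros eps Heps.
  set (C := Phi al (S (S n)) (y + 1)).
  assert (HC : 0 < C) by (apply Phi_pos; auto).
  assert (Hd : 0 < Rmin 1 (eps / C)) by (apply Rmin_pos; [lra | apply Rdiv_lt_0_compat; auto]).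
  exists (mkposreal _ Hd). intros h Hh0 Hh. simpl in Hh.
  assert (Hh1 : Rabs h <= 1) by (assert (Rmin 1 (eps / C) <= 1) by apply Rmin_l; lra).
  assert (Hh2 : Rabs h * C < eps).
  { assert (Rmin 1 (eps / C) <= eps / C) by apply Rmin_r.
    apply Rmult_lt_reg_r with (/ C); [apply Rinv_0_lt_compat; auto |].
    rewrite Rmult_assoc, Rinv_r by lra. fold (eps / C). lra. }
  assert (HR := Phi_taylor1_bound al n y h Hal Hh1). fold C in HR.
  assert (Hah : 0 < Rabs h) by (apply Rabs_pos_lt; auto).
  replace ((Phi al n (y + h) - Phi al n y) / h - Phi al (S n) y)
    with ((Phi al n (y + h) - Phi al n y - h * Phi al (S n) y) / h) by (field; auto).
  unfold Rdiv. rewrite Rabs_mult, Rabs_inv.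
  apply Rmult_lt_reg_r with (Rabs h); auto.
  rewrite Rmult_assoc, Rinv_l, Rmult_1_r by lra.
  rewrite <- (pow2_abs h) in HR. nra.
Qed.

(* [Phi_boundary al y] vanishes at both ends of (0, +oo), so its derivative integrates to 0. *)

Definition Phi_boundary (al y u : R) : R := exp (al * ln u) * exp (y * u - u ^ 2 / 2).

Definition Phi_boundary_deriv (al y u : R) : R :=
  al * Phi_integrand al 0 y u + y * Phi_integrand al 1 y u - Phi_integrand al 2 y u.

Lemma is_derive_Phi_boundary al y u : 0 < u ->
  is_derive (Phi_boundary al y) u (Phi_boundary_deriv al y u).
Proof.
  intro Hu. unfold Phi_boundary, Phi_boundary_deriv, Phi_integrand. auto_derive; auto.
  replace (exp (al * ln u)) with (exp ((al - 1) * ln u) * exp (ln u))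
    by (rewrite <- exp_plus; f_equal; ring).
  rewrite exp_ln by auto. simpl. unfold Rminus, Rdiv. field. lra.
Qed.

Lemma Phi_boundary_deriv_continuous al y u : 0 < u -> continuous (Phi_boundary_deriv al y) u.
Proof.
  intro Hu. apply (ex_derive_continuous (V := R_NormedModule)).
  unfold Phi_boundary_deriv, Phi_integrand. auto_derive. repeat split; auto.
Qed.

Lemma Phi_boundary_lim_0 al y : 0 < al -> filterlim (Phi_boundary al y) (at_right 0) (locally 0).
Proof.
  intros Hal P [eps HP].
  set (e1 := eps * exp (- (y ^ 2 / 2))).
  assert (He1 : 0 < e1) by (apply Rmult_lt_0_compat; [apply cond_pos | apply exp_pos]).
  set (d := exp (ln e1 / al)).
  exists (mkposreal d (exp_pos _)). intros x Hx Hx0. apply HP, ball_Rabs.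
  apply ball_bounds in Hx. simpl in Hx. rewrite Rminus_0_r.
  unfold Phi_boundary. rewrite Rabs_pos_eq by (left; apply Rmult_lt_0_compat; apply exp_pos).
  assert (Hpow : exp (al * ln x) < e1).
  { rewrite <- (exp_ln e1) by auto. apply exp_increasing.
    assert (ln x < ln d) by (apply ln_increasing; lra).
    unfold d in H. rewrite ln_exp in H.
    apply Rmult_lt_compat_l with (r := al) in H; auto.
    replace (al * (ln e1 / al)) with (ln e1) in H by (field; lra). lra. }
  assert (Hgauss : exp (y * x - x ^ 2 / 2) <= exp (y ^ 2 / 2)).
  { apply exp_le_exp. assert (0 <= (x - y) ^ 2) by apply pow2_ge_0. lra. }
  apply Rle_lt_trans with (exp (al * ln x) * exp (y ^ 2 / 2)).
  { apply Rmult_le_compat_l; auto. left; apply exp_pos. }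
  apply Rlt_le_trans with (e1 * exp (y ^ 2 / 2)).
  { apply Rmult_lt_compat_r; auto. apply exp_pos. }
  unfold e1. rewrite Rmult_assoc, <- exp_plus, Rplus_opp_l, exp_0. simpl. lra.
Qed.

Lemma Phi_boundary_lim_infty al y : 0 < al ->
  filterlim (Phi_boundary al y) (Rbar_locally p_infty) (locally 0).
Proof.
  intros Hal P [eps HP].
  set (x0 := Rmax 1 (Rmax (2 * (al + y + 1)) (- ln eps))).
  assert (1 <= x0) by apply Rmax_l.
  assert (Rmax (2 * (al + y + 1)) (- ln eps) <= x0) by apply Rmax_r.
  assert (2 * (al + y + 1) <= Rmax (2 * (al + y + 1)) (- ln eps)) by apply Rmax_l.
  assert (- ln eps <= Rmax (2 * (al + y + 1)) (- ln eps)) by apply Rmax_r.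
  exists x0. intros x Hx. apply HP, ball_Rabs.
  rewrite Rminus_0_r. unfold Phi_boundary.
  rewrite Rabs_pos_eq by (left; apply Rmult_lt_0_compat; apply exp_pos).
  rewrite <- exp_plus.
  assert (al * ln x <= al * x).
  { apply Rmult_le_compat_l; [lra |]. rewrite <- (ln_exp x) at 2.
    apply ln_le; [lra |]. assert (Hx1 := exp_ineq1_le x). lra. }
  assert (0 <= x * (x - 2 * (al + y + 1))) by (apply Rmult_le_pos; lra).
  apply Rle_lt_trans with (exp (- x)); [apply exp_le_exp; lra |].
  rewrite <- (exp_ln eps) by apply cond_pos. apply exp_increasing. lra.
Qed.

Lemma Phi_ode al y : 0 < al -> Phi al 2 y = y * Phi al 1 y + al * Phi al 0 y.
Proof.
  intro Hal.
  assert (Hin : forall Q : R -> Prop, (forall x, 0 < x -> Q x) ->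
            filter_prod (at_right 0) (Rbar_locally p_infty)
              (fun ab => forall x, Rmin (fst ab) (snd ab) <= x <= Rmax (fst ab) (snd ab) -> Q x)).
  { intros Q HQ. apply (filter_prod_0_infty (fun a b => forall x, Rmin a b <= x <= Rmax a b -> Q x)).
    intros a b Ha Hb x Hx. rewrite Rmin_left in Hx by lra. apply HQ. lra. }
  assert (HD : is_RInt_gen (Derive (Phi_boundary al y)) (at_right 0) (Rbar_locally p_infty) (0 - 0)).
  { apply is_RInt_gen_Derive.
    - apply Hin. intros x Hx. eexists. apply is_derive_Phi_boundary; auto.
    - apply Hin. intros x Hx.
      apply continuous_ext_loc with (Phi_boundary_deriv al y).
      + exists (mkposreal x Hx). intros t Ht. apply ball_bounds in Ht. simpl in Ht.
        symmetry. apply is_derive_unique, is_derive_Phi_boundary. lra.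
      + apply Phi_boundary_deriv_continuous; auto.
    - apply Phi_boundary_lim_0; auto.
    - apply Phi_boundary_lim_infty; auto. }
  assert (HC : is_RInt_gen (Phi_boundary_deriv al y) (at_right 0) (Rbar_locally p_infty) (0 - 0)).
  { apply (is_RInt_gen_ext (Derive (Phi_boundary al y))); auto.
    apply (filter_prod_0_infty (fun a b => forall x, Rmin a b < x < Rmax a b ->
             Derive (Phi_boundary al y) x = Phi_boundary_deriv al y x)).
    intros a b Ha Hb x Hx. rewrite Rmin_left in Hx by lra.
    apply is_derive_unique, is_derive_Phi_boundary. lra. }
  assert (HL : is_RInt_gen (Phi_boundary_deriv al y) (at_right 0) (Rbar_locally p_infty)
                 (al * Phi al 0 y + y * Phi al 1 y - Phi al 2 y)).
  { apply (is_RInt_gen_minus (V := R_NormedModule)).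
    - apply (is_RInt_gen_plus (V := R_NormedModule));
        apply (is_RInt_gen_scal (V := R_NormedModule)), is_RInt_gen_Phi; auto.
    - apply is_RInt_gen_Phi; auto. }
  apply (is_RInt_gen_unique (V := R_CompleteNormedModule)) in HC.
  apply (is_RInt_gen_unique (V := R_CompleteNormedModule)) in HL.
  rewrite HC in HL. lra.
Qed.

(** * The functions [G], [F] and [psi] *)

Section Fundamental_solutions.

Variables al k th : R.
Hypothesis Hal : 0 < al.
Hypothesis Hk : 0 < k.

Definition Gfun x := Phi al 0 (k * (th - x)).
Definition Ffun x := Phi al 0 (k * (x - th)).
Definition dGfun x := - k * Phi al 1 (k * (th - x)).
Definition dFfun x := k * Phi al 1 (k * (x - th)).
Definition d2Gfun x := k ^ 2 * Phi al 2 (k * (th - x)).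
Definition d2Ffun x := k ^ 2 * Phi al 2 (k * (x - th)).
Definition wronskian x := dFfun x * Gfun x - Ffun x * dGfun x.
Definition psi_fun x := Ffun x / Gfun x.

Lemma is_derive_Phi_affine n a b x :
  is_derive (fun t => Phi al n (a * t + b)) x (a * Phi al (S n) (a * x + b)).
Proof.
  apply (is_derive_comp (Phi al n) (fun t => a * t + b)); [apply is_derive_Phi; auto |].
  auto_derive; auto. ring.
Qed.

Lemma is_derive_Phi_neg n x :
  is_derive (fun t => Phi al n (k * (th - t))) x (- k * Phi al (S n) (k * (th - x))).
Proof.
  replace (k * (th - x)) with (- k * x + k * th) by ring.
  apply (is_derive_ext (fun t => Phi al n (- k * t + k * th)));
    [intro t; f_equal; ring | apply is_derive_Phi_affine].
Qed.

Lemma is_derive_Phi_pos n x :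
  is_derive (fun t => Phi al n (k * (t - th))) x (k * Phi al (S n) (k * (x - th))).
Proof.
  replace (k * (x - th)) with (k * x + - k * th) by ring.
  apply (is_derive_ext (fun t => Phi al n (k * t + - k * th)));
    [intro t; f_equal; ring | apply is_derive_Phi_affine].
Qed.

Lemma is_derive_Gfun x : is_derive Gfun x (dGfun x).
Proof. exact (is_derive_Phi_neg 0 x). Qed.

Lemma is_derive_Ffun x : is_derive Ffun x (dFfun x).
Proof. exact (is_derive_Phi_pos 0 x). Qed.

Lemma is_derive_dGfun x : is_derive dGfun x (d2Gfun x).
Proof.
  unfold dGfun, d2Gfun. replace (k ^ 2) with (- k * - k) by ring. rewrite Rmult_assoc.
  apply is_derive_scal, (is_derive_Phi_neg 1).
Qed.

Lemma is_derive_dFfun x : is_derive dFfun x (d2Ffun x).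
Proof.
  unfold dFfun, d2Ffun. replace (k ^ 2) with (k * k) by ring. rewrite Rmult_assoc.
  apply is_derive_scal, (is_derive_Phi_pos 1).
Qed.

Lemma Gfun_pos x : 0 < Gfun x.
Proof. exact (Phi_pos al 0 _ Hal). Qed.

Lemma Ffun_pos x : 0 < Ffun x.
Proof. exact (Phi_pos al 0 _ Hal). Qed.

Lemma dGfun_neg x : dGfun x < 0.
Proof. unfold dGfun. assert (0 < Phi al 1 (k * (th - x))) by (apply Phi_pos; auto). nra. Qed.

Lemma dFfun_pos x : 0 < dFfun x.
Proof. unfold dFfun. assert (0 < Phi al 1 (k * (x - th))) by (apply Phi_pos; auto). nra. Qed.

Lemma wronskian_pos x : 0 < wronskian x.
Proof.
  unfold wronskian. assert (H1 := Gfun_pos x). assert (H2 := Ffun_pos x).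
  assert (H3 := dGfun_neg x). assert (H4 := dFfun_pos x). nra.
Qed.

Lemma is_derive_psi_fun x : is_derive psi_fun x (wronskian x / Gfun x ^ 2).
Proof.
  apply is_derive_div; [apply is_derive_Ffun | apply is_derive_Gfun |].
  apply Rgt_not_eq, Gfun_pos.
Qed.

Lemma psi_fun_pos x : 0 < psi_fun x.
Proof. apply Rdiv_lt_0_compat; [apply Ffun_pos | apply Gfun_pos]. Qed.

Lemma psi_fun_deriv_pos x : 0 < wronskian x / Gfun x ^ 2.
Proof. apply Rdiv_lt_0_compat; [apply wronskian_pos | apply pow_lt, Gfun_pos]. Qed.

Lemma psi_fun_increasing x y : x < y -> psi_fun x < psi_fun y.
Proof.
  intro Hxy.
  apply (incr_function psi_fun m_infty p_infty (fun x => wronskian x / Gfun x ^ 2)); auto.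
  - intros t _ _. apply is_derive_psi_fun.
  - intros t _ _. apply psi_fun_deriv_pos.
  - exact I.
  - exact I.
Qed.

Lemma psi_fun_lt x y : psi_fun x < psi_fun y <-> x < y.
Proof.
  split; [| apply psi_fun_increasing].
  intro H. destruct (Rlt_or_le x y) as [| Hyx]; auto.
  destruct Hyx as [Hyx | ->]; [apply psi_fun_increasing in Hyx |]; lra.
Qed.

Lemma Phi_unbounded n M : exists y0, forall y, y0 <= y -> M < Phi al n y.
Proof.
  destruct (Phi_exp_lb al n 1 Hal Rlt_0_1) as [c [Hc Hlb]].
  set (y0 := Rabs (ln (Rabs M / c + 1))).
  exists y0. intros y Hy.
  assert (Hy0 : 0 <= y) by (assert (0 <= y0) by apply Rabs_pos; lra).
  apply Rlt_le_trans with (c * exp (1 * y)); [| apply Hlb; auto].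
  rewrite Rmult_1_l.
  assert (Rabs M / c + 1 <= exp y).
  { rewrite <- (exp_ln (Rabs M / c + 1)) by (assert (0 <= Rabs M / c) by
      (apply Rdiv_le_0_compat; [apply Rabs_pos | auto]); lra).
    apply exp_le_exp. assert (ln (Rabs M / c + 1) <= y0) by apply Rle_abs. lra. }
  assert (M <= Rabs M) by apply Rle_abs.
  assert (Rabs M = c * (Rabs M / c)) by (field; lra).
  nra.
Qed.

Lemma Gfun_unbounded M : exists x0, forall x, x <= x0 -> M < Gfun x.
Proof.
  destruct (Phi_unbounded 0 M) as [y0 Hy0].
  exists (th - Rabs y0 / k). intros x Hx. apply Hy0.
  assert (y0 <= Rabs y0) by apply Rle_abs.
  assert (Rabs y0 <= k * (th - x)); [| lra].
  replace (Rabs y0) with (k * (Rabs y0 / k)) by (field; lra).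
  apply Rmult_le_compat_l; lra.
Qed.

Lemma Ffun_unbounded M : exists x0, forall x, x0 <= x -> M < Ffun x.
Proof.
  destruct (Phi_unbounded 0 M) as [y0 Hy0].
  exists (th + Rabs y0 / k). intros x Hx. apply Hy0.
  assert (y0 <= Rabs y0) by apply Rle_abs.
  assert (Rabs y0 <= k * (x - th)); [| lra].
  replace (Rabs y0) with (k * (Rabs y0 / k)) by (field; lra).
  apply Rmult_le_compat_l; lra.
Qed.

Lemma psi_fun_small z : 0 < z -> exists x, psi_fun x < z.
Proof.
  intro Hz. set (P0 := Phi al 0 0).
  destruct (Gfun_unbounded (P0 / z)) as [x0 Hx0].
  exists (Rmin x0 th).
  assert (HF : Ffun (Rmin x0 th) <= P0).
  { unfold Ffun, P0. apply Phi_le_compat; auto. assert (Rmin x0 th <= th) by apply Rmin_r. nra. }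
  assert (HG := Hx0 (Rmin x0 th) (Rmin_l _ _)).
  assert (HG0 := Gfun_pos (Rmin x0 th)).
  unfold psi_fun. apply Rmult_lt_reg_r with (Gfun (Rmin x0 th)); auto.
  unfold Rdiv. rewrite Rmult_assoc, Rinv_l, Rmult_1_r by lra.
  apply Rmult_lt_compat_l with (r := z) in HG; auto.
  replace (z * (P0 / z)) with P0 in HG by (field; lra). lra.
Qed.

Lemma psi_fun_large z : 0 < z -> exists x, z < psi_fun x.
Proof.
  intro Hz. set (P0 := Phi al 0 0).
  assert (HP0 : 0 < P0) by (apply Phi_pos; auto).
  destruct (Ffun_unbounded (P0 * z)) as [x0 Hx0].
  exists (Rmax x0 th).
  assert (HG : Gfun (Rmax x0 th) <= P0).
  { unfold Gfun, P0. apply Phi_le_compat; auto. assert (th <= Rmax x0 th) by apply Rmax_r. nra. }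
  assert (HF := Hx0 (Rmax x0 th) (Rmax_l _ _)).
  assert (HG0 := Gfun_pos (Rmax x0 th)).
  unfold psi_fun. apply Rmult_lt_reg_r with (Gfun (Rmax x0 th)); auto.
  unfold Rdiv. rewrite Rmult_assoc, Rinv_l, Rmult_1_r by lra. nra.
Qed.

Lemma psi_fun_surj z : 0 < z -> exists x, psi_fun x = z.
Proof.
  intro Hz.
  destruct (psi_fun_small z Hz) as [x1 H1]. destruct (psi_fun_large z Hz) as [x2 H2].
  assert (Hx : x1 < x2) by (apply psi_fun_lt; lra).
  destruct (IVT (fun x => psi_fun x - z) x1 x2) as [x [_ Hx0]]; [| lra | lra | lra |].
  - intro x. apply continuity_pt_minus; [| apply continuity_pt_const; intros ? ?; auto].
    apply continuity_pt_filterlim, (ex_derive_continuous (V := R_NormedModule)).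
    eexists. apply is_derive_psi_fun.
  - exists x. lra.
Qed.

End Fundamental_solutions.

Lemma is_derive_Rmult (f g : R -> R) (x df dg : R) :
  is_derive f x df -> is_derive g x dg ->
  is_derive (fun t => f t * g t) x (df * g x + f x * dg).
Proof. intros Hf Hg. apply (is_derive_mult f g); auto. intros; apply Rmult_comm. Qed.

Lemma is_derive_Rminus (f g : R -> R) (x df dg : R) :
  is_derive f x df -> is_derive g x dg -> is_derive (fun t => f t - g t) x (df - dg).
Proof. intros Hf Hg. apply (is_derive_minus f g); auto. Qed.

Lemma is_derive_eq (f : R -> R) (x l l' : R) : is_derive f x l -> l = l' -> is_derive f x l'.
Proof. intros H <-. exact H. Qed.

Section Slope.

Variables al k th cs : R.
Hypothesis Hal : 0 < al.
Hypothesis Hk : 0 < k.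
Hypothesis Hcs : 0 < cs.

Notation G := (Gfun al k th).
Notation F := (Ffun al k th).
Notation dG := (dGfun al k th).
Notation dF := (dFfun al k th).
Notation W := (wronskian al k th).

(* [slope x] is the derivative of [H] at [psi x], i.e. (h_s / G)' / psi' at [x]. *)
Definition slope x := (exp x * G x - h_s cs x * dG x) / W x.

(* [slope' = G curv / W], and [curv] is a positive multiple of [exp x * f_s x]. *)
Definition curv x := exp x * (1 + k ^ 2 * (th - x)) - k ^ 2 * al * (exp x - cs).

Lemma is_derive_slope (x : R) : is_derive slope x (G x * curv x / W x).
Proof.
  assert (HW := wronskian_pos al k th Hal Hk x).
  assert (Hh : is_derive (h_s cs) x (exp x)) by (unfold h_s; auto_derive; auto; ring).
  assert (Hnum : is_derive (fun t => exp t * G t - h_s cs t * dG t) x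
                   (exp x * G x - h_s cs x * d2Gfun al k th x)).
  { eapply is_derive_eq.
    - apply is_derive_Rminus; apply is_derive_Rmult;
        [apply is_derive_exp | apply is_derive_Gfun | exact Hh | apply is_derive_dGfun]; auto.
    - ring. }
  assert (HdW : is_derive W x (d2Ffun al k th x * G x - F x * d2Gfun al k th x)).
  { eapply is_derive_eq.
    - apply is_derive_Rminus; apply is_derive_Rmult;
        [apply is_derive_dFfun | apply is_derive_Gfun | apply is_derive_Ffun | apply is_derive_dGfun];
        auto.
    - ring. }
  eapply is_derive_eq; [apply is_derive_div; [exact Hnum | exact HdW | lra] |].
  (* The ODE [Phi 2 = y Phi 1 + al Phi 0] eliminates the second derivatives. *)
  unfold curv, wronskian, h_s, d2Ffun, d2Gfun, dFfun, dGfun, Ffun, Gfun in *.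
  rewrite !(Phi_ode al _ Hal). field. lra.
Qed.

Lemma slope_pos x : cs <= exp x -> 0 < slope x.
Proof.
  intro Hx. apply Rdiv_lt_0_compat; [| apply wronskian_pos; auto].
  unfold h_s. assert (H1 := Gfun_pos al k th Hal x). assert (H2 := dGfun_neg al k th Hal Hk x).
  assert (0 < exp x) by apply exp_pos. nra.
Qed.

(* [F] and [F'] grow like [exp (2 (x - th))] while the numerator of [slope] is
   [O (exp x (G - G'))] and [W >= min (F, F') (G - G')]. *)
Lemma slope_lim_infty eps : 0 < eps -> exists x0, forall x, x0 <= x -> slope x < eps.
Proof.
  intro Heps.
  assert (HN : 0 < 2 / k) by (apply Rdiv_lt_0_compat; lra).
  destruct (Phi_exp_lb al 0 (2 / k) Hal HN) as [c0 [Hc0 Hl0]].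
  destruct (Phi_exp_lb al 1 (2 / k) Hal HN) as [c1 [Hc1 Hl1]].
  set (cm := Rmin c0 (k * c1)).
  assert (Hcm : 0 < cm) by (apply Rmin_pos; nra).
  set (T := eps * cm * exp (- (2 * th))).
  assert (HT : 0 < T)
    by (apply Rmult_lt_0_compat; [apply Rmult_lt_0_compat | apply exp_pos]; lra).
  exists (Rmax th (- ln T) + 1). intros x Hx.
  assert (Hx1 : th < x) by (assert (th <= Rmax th (- ln T)) by apply Rmax_l; lra).
  assert (Hx2 : - ln T < x) by (assert (- ln T <= Rmax th (- ln T)) by apply Rmax_r; lra).
  set (m := cm * exp (2 * (x - th))).
  assert (Hm : 0 < m) by (unfold m; assert (0 < exp (2 * (x - th))) by apply exp_pos; nra).
  assert (E2 : 2 / k * (k * (x - th)) = 2 * (x - th)) by (field; lra).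
  assert (Hy : 0 <= k * (x - th)) by nra.
  assert (HF : m <= F x).
  { apply Rle_trans with (c0 * exp (2 / k * (k * (x - th)))); [| apply Hl0; auto].
    rewrite E2. apply Rmult_le_compat_r; [left; apply exp_pos | apply Rmin_l]. }
  assert (HdF : m <= dF x).
  { apply Rle_trans with (k * (c1 * exp (2 / k * (k * (x - th))))).
    - rewrite E2, <- Rmult_assoc. apply Rmult_le_compat_r; [left; apply exp_pos | apply Rmin_r].
    - apply Rmult_le_compat_l; [lra | apply Hl1; auto]. }
  assert (H1 := Gfun_pos al k th Hal x). assert (H2 := dGfun_neg al k th Hal Hk x).
  assert (HW := wronskian_pos al k th Hal Hk x).
  assert (Hex := exp_pos x).
  assert (Hnum : exp x * G x - h_s cs x * dG x <= exp x * (G x - dG x)) by (unfold h_s; nra).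
  assert (HWm : m * (G x - dG x) <= W x) by (unfold wronskian; nra).
  assert (Hslope : slope x <= exp x / m).
  { unfold slope. apply Rmult_le_reg_r with (W x); auto. unfold Rdiv.
    rewrite Rmult_assoc, Rinv_l, Rmult_1_r by lra.
    apply Rle_trans with (exp x * (G x - dG x)); auto.
    replace (exp x * (G x - dG x)) with (exp x * / m * (m * (G x - dG x))) by (field; lra).
    apply Rmult_le_compat_l; auto. left. apply Rmult_lt_0_compat; auto. apply Rinv_0_lt_compat; auto. }
  assert (Em : exp x / m = exp (- x) / (cm * exp (- (2 * th)))).
  { unfold m. replace (2 * (x - th)) with (x + x + - (2 * th)) by ring.
    rewrite !exp_plus, !exp_Ropp.
    assert (0 < exp (2 * th)) by apply exp_pos. field. repeat split; lra. }
  assert (exp (- x) < T) by (rewrite <- (exp_ln T) by auto; apply exp_increasing; lra).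
  assert (Hc2 : 0 < cm * exp (- (2 * th))) by (apply Rmult_lt_0_compat; auto; apply exp_pos).
  apply Rle_lt_trans with (1 := Hslope). rewrite Em.
  apply Rmult_lt_reg_r with (cm * exp (- (2 * th))); auto.
  unfold Rdiv. rewrite Rmult_assoc, Rinv_l, Rmult_1_r by lra.
  unfold T in *. lra.
Qed.

End Slope.

(** * Calculus on intervals *)

Definition is_interval (D : R -> Prop) : Prop :=
  forall x y z, D x -> D z -> x <= y <= z -> D y.

Lemma is_derive_continuity_pt (f : R -> R) (x d : R) : is_derive f x d -> continuity_pt f x.
Proof.
  intro H. apply continuity_pt_filterlim, (ex_derive_continuous (V := R_NormedModule)).
  exists d. exact H.
Qed.

Lemma interval_between (D : R -> Prop) a b c : is_interval D -> D a -> D b ->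
  Rmin a b <= c <= Rmax a b -> D c.
Proof.
  intros HD Ha Hb Hc. unfold Rmin, Rmax in Hc.
  destruct (Rle_dec a b); [apply HD with a b | apply HD with b a]; auto; lra.
Qed.

Lemma MVT_interval (D : R -> Prop) (f df : R -> R) a b :
  is_interval D -> (forall x, D x -> is_derive f x (df x)) -> D a -> D b ->
  exists c, D c /\ Rmin a b <= c <= Rmax a b /\ f b - f a = df c * (b - a).
Proof.
  intros HD Hd Ha Hb.
  destruct (MVT_gen f a b df) as [c [Hc E]].
  - intros x Hx. apply Hd, (interval_between D a b); auto. lra.
  - intros x Hx. apply (is_derive_continuity_pt _ _ (df x)), Hd, (interval_between D a b); auto.
  - exists c. repeat split; auto; try lra. apply (interval_between D a b); auto.
Qed.

Lemma nondecreasing_of_derive_nonneg (D : R -> Prop) (f df : R -> R) :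
  is_interval D -> (forall x, D x -> is_derive f x (df x)) -> (forall x, D x -> 0 <= df x) ->
  forall x y, D x -> D y -> x <= y -> f x <= f y.
Proof.
  intros HD Hd Hp x y Hx Hy Hxy.
  destruct (MVT_interval D f df x y HD Hd Hx Hy) as [c [Hc [_ E]]].
  assert (0 <= df c * (y - x)) by (apply Rmult_le_pos; auto; lra). lra.
Qed.

Lemma tangent_le_of_derive_nondecreasing (D : R -> Prop) (f df : R -> R) :
  is_interval D -> (forall x, D x -> is_derive f x (df x)) ->
  (forall x y, D x -> D y -> x <= y -> df x <= df y) ->
  forall m c, D m -> D c -> df m * (c - m) <= f c - f m.
Proof.
  intros HD Hd Hm m c HDm HDc.
  destruct (MVT_interval D f df m c HD Hd HDm HDc) as [d [HDd [Hdmc E]]].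
  rewrite E. unfold Rmin, Rmax in Hdmc. destruct (Rle_dec m c).
  - assert (df m <= df d) by (apply Hm; auto; lra). nra.
  - assert (df d <= df m) by (apply Hm; auto; lra). nra.
Qed.

Lemma convex_of_derive_nondecreasing (D : R -> Prop) (f df : R -> R) :
  is_interval D -> (forall x, D x -> is_derive f x (df x)) ->
  (forall x y, D x -> D y -> x <= y -> df x <= df y) ->
  convex_on D f.
Proof.
  intros HD Hd Hm a b t Ha Hb Ht.
  set (m := t * a + (1 - t) * b).
  assert (HDm : D m).
  { apply (interval_between D a b); auto. unfold m, Rmin, Rmax.
    destruct (Rle_dec a b); split; nra. }
  (* Average the two tangent inequalities at [m]. *)
  assert (Ka := tangent_le_of_derive_nondecreasing D f df HD Hd Hm m a HDm Ha).
  assert (Kb := tangent_le_of_derive_nondecreasing D f df HD Hd Hm m b HDm Hb).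
  assert (E : t * (a - m) + (1 - t) * (b - m) = 0) by (unfold m; ring).
  assert (t * (df m * (a - m)) <= t * (f a - f m)) by (apply Rmult_le_compat_l; lra).
  assert ((1 - t) * (df m * (b - m)) <= (1 - t) * (f b - f m)) by (apply Rmult_le_compat_l; lra).
  assert (df m * (t * (a - m) + (1 - t) * (b - m)) = 0) by (rewrite E; ring).
  nra.
Qed.

Lemma concave_of_derive_nonincreasing (D : R -> Prop) (f df : R -> R) :
  is_interval D -> (forall x, D x -> is_derive f x (df x)) ->
  (forall x y, D x -> D y -> x <= y -> df y <= df x) ->
  concave_on D f.
Proof.
  intros HD Hd Hm a b t Ha Hb Ht.
  assert (Hc := convex_of_derive_nondecreasing D (fun z => - f z) (fun z => - df z) HD).
  assert (- f (t * a + (1 - t) * b) <= t * - f a + (1 - t) * - f b); [| lra].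
  apply Hc; auto.
  - intros x Hx. apply (is_derive_opp (V := R_NormedModule) f), Hd; auto.
  - intros x y Hx Hy Hxy. assert (df y <= df x) by auto. lra.
Qed.

(** * The function [H] *)

Section H_properties.

Variables al k th cs : R.
Hypothesis Hal : 0 < al.
Hypothesis Hk : 0 < k.
Hypothesis Hcs : 0 < cs.

Notation G := (Gfun al k th).
Notation psi := (psi_fun al k th).

Variable X : R -> R.
Hypothesis psi_X : forall z, 0 < z -> psi (X z) = z.

Variable H : R -> R.
Hypothesis H_eq : forall z, 0 < z -> H z = h_s cs (X z) / G (X z).

Lemma lt_X z x : 0 < z -> (x < X z <-> psi x < z).
Proof. intro Hz. rewrite <- (psi_X z Hz) at 2. symmetry. apply psi_fun_lt; auto. Qed.

Lemma X_lt z x : 0 < z -> (X z < x <-> z < psi x).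
Proof. intro Hz. rewrite <- (psi_X z Hz) at 2. symmetry. apply psi_fun_lt; auto. Qed.

Lemma X_increasing z z' : 0 < z -> z < z' -> X z < X z'.
Proof. intros Hz Hzz. apply lt_X; [lra |]. rewrite psi_X; auto. Qed.

Lemma X_continuous z : 0 < z -> continuity_pt X z.
Proof.
  intros Hz eps Heps.
  set (a := psi (X z - eps)). set (b := psi (X z + eps)).
  assert (Ha : a < z) by (apply lt_X; auto; lra).
  assert (Hb : z < b) by (apply X_lt; auto; lra).
  assert (Ha0 : 0 < a) by apply psi_fun_pos, Hal.
  exists (Rmin (z - a) (b - z)). split; [apply Rmin_pos; lra |].
  intros z' [_ Hz']. simpl in Hz'. unfold Rdist in Hz' |- *.
  assert (Rmin (z - a) (b - z) <= z - a) by apply Rmin_l.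
  assert (Rmin (z - a) (b - z) <= b - z) by apply Rmin_r.
  apply Rabs_def2 in Hz'.
  assert (X z - eps < X z') by (apply lt_X; unfold a in *; lra).
  assert (X z' < X z + eps) by (apply X_lt; unfold b in *; lra).
  apply Rabs_def1; lra.
Qed.

Lemma is_derive_X z : 0 < z ->
  is_derive X z (/ (wronskian al k th (X z) / G (X z) ^ 2)).
Proof.
  intro Hz.
  set (dpsi := fun x => wronskian al k th x / G x ^ 2).
  assert (Hdpsi : forall x, is_derive psi x (dpsi x)) by (intro; apply is_derive_psi_fun; auto).
  assert (Prf : forall a, X (z / 2) <= a <= X (2 * z) -> derivable_pt psi a).
  { intros a _. apply ex_derive_Reals_0. exists (dpsi a). apply Hdpsi. }
  assert (Hincr : X (z / 2) <= X z <= X (2 * z)) by (split; left; apply X_increasing; lra).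
  assert (Hcomp : forall z', z / 2 <= z' <= 2 * z -> comp psi X z' = id z')
    by (intros z' Hz'; unfold comp, id; apply psi_X; lra).
  assert (Hval : derive_pt psi (X z) (Prf (X z) Hincr) = dpsi (X z))
    by (apply derive_pt_eq_0, is_derive_Reals, Hdpsi).
  assert (Hne : derive_pt psi (X z) (Prf (X z) Hincr) <> 0).
  { rewrite Hval. apply Rgt_not_eq. exact (psi_fun_deriv_pos al k th Hal Hk (X z)). }
  assert (HX := derivable_pt_lim_recip_interv psi X (z / 2) (2 * z) z Prf
                  (X_continuous z Hz) ltac:(lra) ltac:(lra) Hincr Hcomp Hne).
  rewrite Hval in HX. apply is_derive_Reals. unfold Rdiv in HX. rewrite Rmult_1_l in HX. exact HX.
Qed.

Lemma is_derive_H z : 0 < z -> is_derive H z (slope al k th cs (X z)).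
Proof.
  intro Hz.
  apply is_derive_ext_loc with (fun t => h_s cs (X t) / G (X t)).
  { exists (mkposreal z Hz). intros t Ht. apply ball_bounds in Ht. simpl in Ht.
    symmetry. apply H_eq. lra. }
  assert (HG := Gfun_pos al k th Hal (X z)).
  assert (HW := wronskian_pos al k th Hal Hk (X z)).
  assert (Hq : is_derive (fun x => h_s cs x / G x) (X z)
                 ((exp (X z) * G (X z) - h_s cs (X z) * dGfun al k th (X z)) / G (X z) ^ 2)).
  { apply is_derive_div; [| apply is_derive_Gfun; auto | lra].
    unfold h_s. auto_derive; auto. ring. }
  eapply is_derive_eq; [apply (is_derive_comp _ X z _ _ Hq (is_derive_X z Hz)) |].
  change (scal ?a ?b) with (a * b). unfold slope. field. lra.
Qed.

Lemma Derive_H z : 0 < z -> Derive H z = slope al k th cs (X z).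
Proof. intro Hz. apply is_derive_unique, is_derive_H, Hz. Qed.

Definition d2H z :=
  G (X z) ^ 3 / wronskian al k th (X z) ^ 2 * curv al k th cs (X z).

Lemma is_derive_Derive_H z : 0 < z -> is_derive (Derive H) z (d2H z).
Proof.
  intro Hz.
  apply is_derive_ext_loc with (fun t => slope al k th cs (X t)).
  { exists (mkposreal z Hz). intros t Ht. apply ball_bounds in Ht. simpl in Ht.
    symmetry. apply Derive_H. lra. }
  assert (HG := Gfun_pos al k th Hal (X z)).
  assert (HW := wronskian_pos al k th Hal Hk (X z)).
  eapply is_derive_eq.
  - apply (is_derive_comp (slope al k th cs) X z); [apply is_derive_slope; auto | apply is_derive_X, Hz].
  - change (scal ?a ?b) with (a * b). unfold d2H. field. lra.
Qed.

Lemma d2H_coeff_pos z : 0 < G (X z) ^ 3 / wronskian al k th (X z) ^ 2.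
Proof.
  apply Rdiv_lt_0_compat; apply pow_lt; [apply Gfun_pos | apply wronskian_pos]; auto.
Qed.

Lemma H_lim_0 : filterlim H (at_right 0) (locally 0).
Proof.
  intros P [eps HP].
  assert (Heps := cond_pos eps).
  destruct (Gfun_unbounded al k th Hal Hk ((cs + 1) / eps)) as [x0 Hx0].
  set (x1 := Rmin x0 0).
  exists (mkposreal _ (psi_fun_pos al k th Hal x1)). intros z Hz Hz0. apply HP, ball_Rabs.
  apply ball_bounds in Hz. simpl in Hz. rewrite Rminus_0_r, H_eq by auto.
  assert (Hx : X z < x1) by (apply X_lt; lra).
  assert (HG := Hx0 (X z) ltac:(assert (x1 <= x0) by apply Rmin_l; lra)).
  assert (HG0 := Gfun_pos al k th Hal (X z)).
  assert (Hh : Rabs (h_s cs (X z)) <= cs + 1).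
  { unfold h_s. assert (exp (X z) <= 1).
    { rewrite <- exp_0. apply exp_le_exp. assert (x1 <= 0) by apply Rmin_r. lra. }
    assert (0 < exp (X z)) by apply exp_pos. apply Rabs_le. lra. }
  unfold Rdiv. rewrite Rabs_mult, Rabs_inv, (Rabs_pos_eq (G (X z))) by lra.
  apply Rmult_lt_reg_r with (G (X z)); auto.
  rewrite Rmult_assoc, Rinv_l, Rmult_1_r by lra.
  apply Rmult_lt_compat_l with (r := eps) in HG; auto.
  replace (eps * ((cs + 1) / eps)) with (cs + 1) in HG by (field; lra). lra.
Qed.

Lemma H_neg z : 0 < z < psi (ln cs) -> H z < 0.
Proof.
  intros [Hz Hzc]. rewrite H_eq by auto.
  assert (exp (X z) < cs).
  { rewrite <- (exp_ln cs) by auto. apply exp_increasing, X_lt; auto. }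
  apply Rdiv_neg_pos; [unfold h_s; lra | apply Gfun_pos; auto].
Qed.

Lemma X_gt_ln z : psi (ln cs) < z -> cs < exp (X z).
Proof.
  intro Hz. assert (0 < z) by (assert (0 < psi (ln cs)) by apply psi_fun_pos, Hal; lra).
  rewrite <- (exp_ln cs) by auto. apply exp_increasing, lt_X; auto.
Qed.

Lemma H_pos z : psi (ln cs) < z -> 0 < H z.
Proof.
  intro Hz. assert (0 < psi (ln cs)) by apply psi_fun_pos, Hal.
  assert (Hx := X_gt_ln z Hz).
  rewrite H_eq by lra. apply Rdiv_lt_0_compat; [unfold h_s; lra | apply Gfun_pos; auto].
Qed.

Lemma H_increasing a b : psi (ln cs) < a -> a < b -> H a < H b.
Proof.
  intros Ha Hab. assert (0 < psi (ln cs)) by apply psi_fun_pos, Hal.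
  apply (incr_function H (psi (ln cs)) p_infty (Derive H)); simpl; auto.
  - intros x Hx _. rewrite Derive_H by lra. apply is_derive_H. lra.
  - intros x Hx _. rewrite Derive_H by lra. apply slope_pos; auto.
    left. apply X_gt_ln; auto.
Qed.

Lemma Derive_H_lim_infty : is_lim (Derive H) p_infty 0.
Proof.
  intros P [eps HP].
  destruct (slope_lim_infty al k th cs Hal Hk Hcs eps (cond_pos eps)) as [x0 Hx0].
  set (x1 := Rmax x0 (ln cs)).
  assert (Hx1 : 0 < psi x1) by apply psi_fun_pos, Hal.
  exists (psi x1). intros z Hz. apply HP, ball_Rabs.
  assert (Hx : x1 < X z) by (apply lt_X; lra).
  assert (x0 <= x1) by apply Rmax_l. assert (ln cs <= x1) by apply Rmax_r.
  rewrite Derive_H, Rminus_0_r by lra.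
  assert (0 < slope al k th cs (X z)).
  { apply slope_pos; auto. left. rewrite <- (exp_ln cs) by auto. apply exp_increasing. lra. }
  rewrite Rabs_pos_eq by lra. apply Hx0. lra.
Qed.

Lemma H_convex xs : (forall x, x <= xs -> 0 <= curv al k th cs x) ->
  convex_on (fun z => 0 < z <= psi xs) H.
Proof.
  intro Hcurv.
  apply (convex_of_derive_nondecreasing _ H (Derive H)).
  - intros x y z Hx Hz Hy. lra.
  - intros x Hx. rewrite Derive_H by lra. apply is_derive_H. lra.
  - apply (nondecreasing_of_derive_nonneg _ (Derive H) d2H).
    + intros x y z Hx Hz Hy. lra.
    + intros x Hx. apply is_derive_Derive_H. lra.
    + intros x Hx. apply Rmult_le_pos; [left; apply d2H_coeff_pos |]. apply Hcurv.
      destruct (Rle_or_lt (X x) xs) as [| Hlt]; auto.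
      apply (lt_X x xs) in Hlt; lra.
Qed.

Lemma H_concave xs : (forall x, xs <= x -> curv al k th cs x <= 0) ->
  concave_on (fun z => psi xs <= z) H.
Proof.
  intro Hcurv. assert (0 < psi xs) by apply psi_fun_pos, Hal.
  apply (concave_of_derive_nonincreasing _ H (Derive H)).
  - intros x y z Hx Hz Hy. lra.
  - intros x Hx. rewrite Derive_H by lra. apply is_derive_H. lra.
  - intros x y Hx Hy Hxy.
    assert (- Derive H x <= - Derive H y); [| lra].
    apply (nondecreasing_of_derive_nonneg (fun z => psi xs <= z) (fun z => - Derive H z)
             (fun z => - d2H z)); auto.
    + intros a b c Ha Hc Hb. lra.
    + intros w Hw. apply (is_derive_opp (V := R_NormedModule) (Derive H)), is_derive_Derive_H. lra.
    + intros w Hw. assert (d2H w <= 0); [| lra].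
      apply Rmult_le_0_l; [left; apply d2H_coeff_pos |]. apply Hcurv.
      destruct (Rle_or_lt xs (X w)) as [| Hlt]; auto.
      apply (X_lt w xs) in Hlt; lra.
Qed.

End H_properties.

(** * The Ornstein-Uhlenbeck parameters *)

Lemma G_ou_eq mu sigma r theta :
  G_ou mu sigma r theta = Gfun (r / mu) (kappa mu sigma) theta.
Proof.
  apply functional_extensionality. intro x.
  unfold G_ou, Gfun, Phi. f_equal. apply functional_extensionality. intro u.
  unfold Phi_integrand, Rpower. simpl. ring.
Qed.

Lemma psi_ou_eq mu sigma r theta :
  psi_ou mu sigma r theta = psi_fun (r / mu) (kappa mu sigma) theta.
Proof.
  apply functional_extensionality. intro x.
  unfold psi_ou, psi_fun. rewrite G_ou_eq. f_equal.
  unfold F_ou, Ffun, Phi. f_equal. apply functional_extensionality. intro u.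
  unfold Phi_integrand, Rpower. simpl. ring.
Qed.

Lemma kappa_sqr mu sigma : 0 < mu -> 0 < sigma -> kappa mu sigma ^ 2 = 2 * mu / sigma ^ 2.
Proof.
  intros Hmu Hs. unfold kappa. rewrite <- Rsqr_pow2, Rsqr_sqrt; auto.
  apply Rlt_le, Rdiv_lt_0_compat; [lra | apply pow_lt; auto].
Qed.

Lemma curv_eq mu sigma r theta cs x : 0 < mu -> 0 < sigma ->
  curv (r / mu) (kappa mu sigma) theta cs x
    = exp x * (kappa mu sigma ^ 2 / mu) * f_s mu sigma r theta cs x.
Proof.
  intros Hmu Hs. unfold curv, f_s. rewrite kappa_sqr, exp_Ropp by auto.
  assert (0 < exp x) by apply exp_pos. field. repeat split; lra.
Qed.

Lemma f_s_nonincreasing mu sigma r theta cs x y : 0 < mu -> 0 < r -> 0 < cs -> x <= y ->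
  f_s mu sigma r theta cs y <= f_s mu sigma r theta cs x.
Proof.
  intros Hmu Hr Hcs Hxy. unfold f_s.
  assert (exp (- y) <= exp (- x)) by (apply exp_le_exp; lra).
  assert (0 < r * cs) by (apply Rmult_lt_0_compat; auto).
  nra.
Qed.

Lemma hplus_over_lim_m_infty cs (G : R -> R) : 0 < cs ->
  is_lim (fun x => Rmax (h_s cs x) 0 / G x) m_infty 0.
Proof.
  intro Hcs.
  apply is_lim_ext_loc with (fun _ => 0); [| apply is_lim_const].
  exists (ln cs). intros x Hx.
  assert (exp x < cs) by (rewrite <- (exp_ln cs) by auto; apply exp_increasing; auto).
  unfold h_s. rewrite Rmax_right by lra. unfold Rdiv. ring.
Qed.

Theorem lemma4p2 (mu sigma r cs theta xs : R)
  (Hmu : 0 < mu) (Hsigma : 0 < sigma) (Hr : 0 < r) (Hcs : 0 < cs)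
  (Hxs : f_s mu sigma r theta cs xs = 0) :
  let H := H_ou mu sigma r theta cs in
  let psi := psi_ou mu sigma r theta in
  (* continuity on [0, +oo) *)
  is_lim (fun x => Rmax (h_s cs x) 0 / G_ou mu sigma r theta x) m_infty (H 0) /\
  filterlim H (at_right 0) (locally (H 0)) /\
  (forall z, 0 < z -> continuous H z) /\
  (* twice differentiable on (0, +oo) *)
  (forall z, 0 < z -> ex_derive H z /\ ex_derive (Derive H) z) /\
  (* (i) *)
  H 0 = 0 /\
  (forall z, 0 < z < psi (ln cs) -> H z < 0) /\
  (forall z, psi (ln cs) < z -> 0 < H z) /\
  (* (ii) *)
  (forall a b, psi (ln cs) < a -> a < b -> H a < H b) /\
  is_lim (Derive H) p_infty 0 /\
  (* (iii) *)
  convex_on (fun z => 0 < z <= psi xs) H /\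
  concave_on (fun z => psi xs <= z) H.
Proof.
  intros H psi.
  set (al := r / mu). set (k := kappa mu sigma). set (X := psi_inv mu sigma r theta).
  assert (Hal : 0 < al) by (apply Rdiv_lt_0_compat; auto).
  assert (Hk : 0 < k) by (apply sqrt_lt_R0, Rdiv_lt_0_compat; [lra | apply pow_lt; auto]).
  assert (Epsi : psi = psi_fun al k theta) by apply psi_ou_eq.
  assert (psi_X : forall z, 0 < z -> psi_fun al k theta (X z) = z).
  { intros z Hz. rewrite <- Epsi.
    apply (epsilon_spec (inhabits 0) (fun x => psi_ou mu sigma r theta x = z)).
    destruct (psi_fun_surj al k theta Hal Hk z Hz) as [x Hx]. exists x. rewrite <- Hx, <- Epsi. auto. }
  assert (H_eq : forall z, 0 < z -> H z = h_s cs (X z) / Gfun al k theta (X z)).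
  { intros z Hz. unfold H, H_ou. destruct (Rlt_dec 0 z); [| lra]. rewrite G_ou_eq. reflexivity. }
  assert (Hlim := hplus_over_lim_m_infty cs (G_ou mu sigma r theta) Hcs).
  assert (H0 : H 0 = 0).
  { unfold H, H_ou. destruct (Rlt_dec 0 0); [lra |]. rewrite (is_lim_unique _ _ _ Hlim). reflexivity. }
  assert (Hcurv : forall x, curv al k theta cs x = exp x * (k ^ 2 / mu) * f_s mu sigma r theta cs x)
    by (intro; apply curv_eq; auto).
  assert (Hcoeff : forall x, 0 < exp x * (k ^ 2 / mu))
    by (intro; apply Rmult_lt_0_compat; [apply exp_pos | apply Rdiv_lt_0_compat; [apply pow_lt |]; auto]).
  assert (Hfs : forall x y, x <= y -> f_s mu sigma r theta cs y <= f_s mu sigma r theta cs x)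
    by (intros; apply f_s_nonincreasing; auto).
  rewrite H0, Epsi.
  split; [exact Hlim |].
  split; [exact (H_lim_0 al k theta cs Hal Hk Hcs X psi_X H H_eq) |].
  split.
  { intros z Hz. apply (ex_derive_continuous (V := R_NormedModule)).
    eexists. exact (is_derive_H al k theta cs Hal Hk X psi_X H H_eq z Hz). }
  split.
  { intros z Hz. split; eexists;
      [exact (is_derive_H al k theta cs Hal Hk X psi_X H H_eq z Hz)
      | exact (is_derive_Derive_H al k theta cs Hal Hk X psi_X H H_eq z Hz)]. }
  split; [reflexivity |].
  split; [exact (H_neg al k theta cs Hal Hk Hcs X psi_X H H_eq) |].
  split; [exact (H_pos al k theta cs Hal Hk Hcs X psi_X H H_eq) |].
  split; [exact (H_increasing al k theta cs Hal Hk Hcs X psi_X H H_eq) |].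
  split; [exact (Derive_H_lim_infty al k theta cs Hal Hk Hcs X psi_X H H_eq) |].
  split.
  - apply (H_convex al k theta cs Hal Hk X psi_X H H_eq xs).
    intros x Hx. rewrite Hcurv. assert (Hf := Hfs x xs Hx). assert (Hc := Hcoeff x). nra.
  - apply (H_concave al k theta cs Hal Hk X psi_X H H_eq xs).
    intros x Hx. rewrite Hcurv. assert (Hf := Hfs xs x Hx). assert (Hc := Hcoeff x). nra.
Qed.
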